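(* Let $\alpha>0$ and let $X_\alpha:\mathbb{C}\cong\mathbb{R}^2\to\mathrm{Nil}_3$ be the map defined in the context (with $\theta=\tilde\theta_\alpha$). Then $X_\alpha$ is simply periodic: there exists $Z\in\mathbb{C}\setminus\{0\}$ such that $X_\alpha(z+Z)=X_\alpha(z)$ for all $z\in\mathbb{C}$.
   Context: $\mathrm{Nil}_3$ is $\mathbb{R}^3$ with the metric $dx_1^2+dx_2^2+\big(dx_3+\tfrac12(x_2dx_1-x_1dx_2)\big)^2$. For $\alpha>0$ and $\theta\in\mathbb{R}$ set $C_{\alpha,\theta}=\frac{\sin(2\theta)}{2\alpha}$ and $P_{\alpha,\theta}(x)=\alpha^2+\cos(2\theta)x^2-C_{\alpha,\theta}^2x^4$. Let $\theta^+_\alpha=\pi/2$ if $\alpha>1$, and $\theta^+_\alpha=\frac12\arccos(1-2\alpha^2)$ if $\alpha\le1$. Let $$L(\alpha,\theta)=\int_{-1}^1\frac{2\alpha C_{\alpha,\theta}^2x^2-\alpha\cos(2\theta)+C_{\alpha,\theta}^2x^2\sqrt{P_{\alpha,\theta}(x)}}{\sqrt{(1-x^2)P_{\alpha,\theta}(x)}(\alpha+\sqrt{P_{\alpha,\theta}(x)})}dx.$$ Let $\theta=\tilde\theta_\alpha$ be the unique $\theta\in(0,\theta^+_\alpha)\cap(0,\pi/4)$ with $L(\alpha,\theta)=0$, and $C=C_{\alpha,\theta}$. Let $\varphi$ solve $\varphi'^2=P_{\alpha,\theta}(\cos\varphi)$ with $\varphi(0)=0$ and $\varphi'(0)\le0$.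 Define $\beta'=C\cos^2\varphi$ with $\beta(0)=0$, and $G'=\frac{C^2\cos^2\varphi-\cos 2\theta}{\alpha-\varphi'}$ with $G(0)=0$. Put $A=\alpha v+\beta(u)$. Then $X_\alpha(u+iv)=(x_1,x_2,x_3)$ with $x_1=\frac{G'}{\alpha}\cos\varphi\sinh A-\frac C\alpha\sin\varphi\cosh A$, $x_2=Cv-G$, $x_3=-\frac{x_1x_2}2+\frac C\alpha(\frac{G'}{\alpha}-1)\cos\varphi\cosh A-\frac1\alpha(\frac{C^2}\alpha+G')\sin\varphi\sinh A$, where $\varphi,G,G'$ are evaluated at $u$. *)

From Stdlib Require Import Reals.
From Coquelicot Require Import Coquelicot.
Open Scope R_scope.

Definition Cc (a th : R) : R := sin (2 * th) / (2 * a).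

Definition Pp (a th x : R) : R :=
  a ^ 2 + cos (2 * th) * x ^ 2 - (Cc a th) ^ 2 * x ^ 4.

Definition theta_plus (a : R) : R :=
  if Rlt_dec 1 a then PI / 2 else / 2 * acos (1 - 2 * a ^ 2).

Definition L_integrand (a th x : R) : R :=
  let C := Cc a th in
  let P := Pp a th x in
  (2 * a * C ^ 2 * x ^ 2 - a * cos (2 * th) + C ^ 2 * x ^ 2 * sqrt P)
  / (sqrt ((1 - x ^ 2) * P) * (a + sqrt P)).

Definition L_is_zero (a th : R) : Prop :=
  is_RInt_gen (L_integrand a th) (at_right (-1)) (at_left 1) 0.

Definition Gprime (a th : R) (phi : R -> R) (u : R) : R :=
  ((Cc a th) ^ 2 * cos (phi u) ^ 2 - cos (2 * th)) / (a - Derive phi u).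

(* X_alpha(u + i v) = (x1, x2, x3) *)
Definition Xmap (a th : R) (phi beta G : R -> R) (u v : R) : R * R * R :=
  let C := Cc a th in
  let Gp := Gprime a th phi u in
  let A := a * v + beta u in
  let x1 := Gp / a * cos (phi u) * sinh A - C / a * sin (phi u) * cosh A in
  let x2 := C * v - G u in
  let x3 := - (x1 * x2) / 2
            + C / a * (Gp / a - 1) * cos (phi u) * cosh A
            - / a * (C ^ 2 / a + Gp) * sin (phi u) * sinh A in
  (x1, x2, x3).

From Stdlib Require Import Reals Lra Psatz.
From Coquelicot Require Import Coquelicot.
Open Scope R_scope.

(* Since [phi' ^ 2 = P (cos phi) > 0], Darboux's theorem forces [phi' = - sqrt (P (cos phi))] everywhere,
   so [phi] decreases strictly and [u], [beta], [G] are, up to constants, primitives of functions of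
   [cos phi] evaluated at [phi u].  These integrands are [pi]-periodic, so over the time [T] in which
   [phi] drops by [2 pi], [beta] and [G] increase by constants [K] and [M].  Translating by
   [(T, - K / alpha)] fixes [A], hence [x1] and [x3], and moves [x2] by [- (C K + alpha M) / alpha].
   The substitution [x = cos phi] identifies [C K + alpha M] with [2 L(alpha, theta) = 0]. *)

Lemma is_derive_zero_const (h : R -> R) :
  (forall x, is_derive h x 0) -> forall x, h x = h 0.
Proof.
  intros Hh x.
  destruct (Rtotal_order x 0) as [Hx | [-> | Hx]]; [| reflexivity |].
  - apply (eq_is_derive (V := R_NormedModule) h); [intros; apply Hh | exact Hx].
  - symmetry; apply (eq_is_derive (V := R_NormedModule) h); [intros; apply Hh | exact Hx].
Qed.

Lemma cos_sub_2PI y : cos (y - 2 * PI) = cos y.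
Proof. rewrite cos_minus, cos_2PI, sin_2PI; ring. Qed.

Lemma sin_sub_2PI y : sin (y - 2 * PI) = sin y.
Proof. rewrite sin_minus, cos_2PI, sin_2PI; ring. Qed.

Lemma cos_interior y : 0 < y < PI -> -1 < cos y < 1.
Proof.
  intros Hy; rewrite <- cos_0, <- cos_PI.
  split; apply cos_decreasing_1; lra.
Qed.

Definition primitive (g : R -> R) (y : R) : R := RInt g 0 y.

Section Primitive.

Variable g : R -> R.
Hypothesis g_cont : forall x, continuous g x.

Lemma ex_RInt_everywhere a b : ex_RInt g a b.
Proof. apply (ex_RInt_continuous (V := R_CompleteNormedModule)); intros; apply g_cont. Qed.

Lemma primitive_0 : primitive g 0 = 0.
Proof. apply (RInt_point (V := R_CompleteNormedModule)). Qed.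

Lemma is_derive_primitive y : is_derive (primitive g) y (g y).
Proof.
  apply (is_derive_RInt (V := R_NormedModule) g (primitive g) 0); [| apply g_cont].
  apply filter_forall; intros b; apply (RInt_correct (V := R_CompleteNormedModule)), ex_RInt_everywhere.
Qed.

Lemma primitive_comp (psi dpsi B : R -> R) :
  (forall u, is_derive psi u (dpsi u)) ->
  (forall u, is_derive B u (g (psi u) * dpsi u)) ->
  forall u, B u = B 0 + primitive g (psi u) - primitive g (psi 0).
Proof.
  intros Hpsi HB u.
  enough (B u - primitive g (psi u) = B 0 - primitive g (psi 0)) by lra.
  apply (is_derive_zero_const (fun u => B u - primitive g (psi u))); intros x.
  replace 0 with (g (psi x) * dpsi x - dpsi x * g (psi x)) by ring.
  apply (is_derive_minus B); [apply HB |].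
  apply (is_derive_comp (primitive g) psi); [apply is_derive_primitive | apply Hpsi].
Qed.

Lemma primitive_shift p :
  (forall y, g (y + p) = g y) ->
  forall y, primitive g (y + p) = primitive g y + primitive g p.
Proof.
  intros Hp y.
  enough (primitive g y = primitive g 0 + primitive g (y + p) - primitive g (0 + p))
    by (rewrite primitive_0, !Rplus_0_l in *; lra).
  apply (primitive_comp (fun y => y + p) (fun _ => 1) (primitive g)); intros u.
  - auto_derive; auto; ring.
  - rewrite Hp, Rmult_1_r; apply is_derive_primitive.
Qed.

Lemma primitive_sub_twice_period p :
  (forall y, g (y + p) = g y) ->
  forall y, primitive g (y - 2 * p) = primitive g y - primitive g (2 * p).
Proof.
  intros Hp y.
  assert (Hp2 : forall y, g (y + 2 * p) = g y).
  { intros z; replace (z + 2 * p) with (z + p + p) by ring; rewrite !Hp; reflexivity. }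
  pose proof (primitive_shift (2 * p) Hp2 (y - 2 * p)) as E.
  replace (y - 2 * p + 2 * p) with y in E by ring; lra.
Qed.

Lemma primitive_lt : (forall x, 0 < g x) ->
  forall y1 y2, y1 < y2 -> primitive g y1 < primitive g y2.
Proof.
  intros Hpos y1 y2 Hy.
  unfold primitive.
  rewrite <- (RInt_Chasles (V := R_CompleteNormedModule) g 0 y1 y2) by apply ex_RInt_everywhere.
  pose proof (RInt_gt_0 g y1 y2 Hy (fun x _ => Hpos x) (fun x _ => g_cont x)).
  change (plus ?x ?y) with (x + y); lra.
Qed.

Lemma primitive_inj : (forall x, 0 < g x) ->
  forall y1 y2, primitive g y1 = primitive g y2 -> y1 = y2.
Proof.
  intros Hpos y1 y2 E.
  destruct (Rtotal_order y1 y2) as [H | [H | H]]; auto;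
    pose proof (primitive_lt Hpos _ _ H); lra.
Qed.

End Primitive.

Lemma primitive_lin (f g : R -> R) (c d : R) :
  (forall x, continuous f x) -> (forall x, continuous g x) ->
  forall y, primitive (fun x => c * f x + d * g x) y
            = c * primitive f y + d * primitive g y.
Proof.
  intros Hf Hg y; unfold primitive.
  rewrite (RInt_plus (V := R_CompleteNormedModule) (fun x => c * f x) (fun x => d * g x)).
  - rewrite (RInt_scal (V := R_CompleteNormedModule) f),
            (RInt_scal (V := R_CompleteNormedModule) g)
      by (apply ex_RInt_everywhere; auto).
    reflexivity.
  - apply (ex_RInt_scal (V := R_CompleteNormedModule) f), ex_RInt_everywhere; auto.
  - apply (ex_RInt_scal (V := R_CompleteNormedModule) g), ex_RInt_everywhere; auto.
Qed.

Lemma is_derive_ge0_at_right_min (f : R -> R) x l d :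
  is_derive f x l -> 0 < d -> (forall y, x < y < x + d -> f x <= f y) -> 0 <= l.
Proof.
  intros Hd Hd0 Hmin.
  apply is_derive_Reals in Hd.
  destruct (Rle_or_lt 0 l) as [| Hl]; auto.
  destruct (Hd (- l) ltac:(lra)) as [del Hdel].
  pose proof (cond_pos del).
  pose proof (Rmin_l (d / 2) (del / 2)); pose proof (Rmin_r (d / 2) (del / 2)).
  assert (0 < Rmin (d / 2) (del / 2)) by (apply Rmin_pos; lra).
  set (h := Rmin (d / 2) (del / 2)) in *.
  specialize (Hdel h ltac:(lra) ltac:(rewrite Rabs_pos_eq; lra)).
  specialize (Hmin (x + h) ltac:(lra)).
  assert (0 <= (f (x + h) - f x) / h) by (apply Rdiv_le_0_compat; lra).
  revert Hdel; unfold Rabs; destruct Rcase_abs; lra.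
Qed.

Lemma is_derive_le0_at_left_min (f : R -> R) x l d :
  is_derive f x l -> 0 < d -> (forall y, x - d < y < x -> f x <= f y) -> l <= 0.
Proof.
  intros Hd Hd0 Hmin.
  assert (Hr : is_derive (fun y => f (- y)) (- x) (- l)).
  { replace (- l) with (-1 * l) by ring.
    apply (is_derive_comp f Ropp); [rewrite Ropp_involutive; exact Hd |].
    auto_derive; auto; ring. }
  enough (0 <= - l) by lra.
  apply (is_derive_ge0_at_right_min _ _ _ d Hr Hd0).
  intros y Hy; rewrite Ropp_involutive; apply Hmin; lra.
Qed.

Lemma derive_Darboux (f df : R -> R) a b :
  (forall x, is_derive f x (df x)) -> a < b -> df a < 0 -> 0 < df b ->
  exists c, a < c < b /\ df c = 0.
Proof.
  intros Hd Hab Ha Hb.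
  destruct (continuity_ab_min f a b) as [m [Hm Hmab]]; [lra | |].
  { intros c _; apply continuity_pt_filterlim, (ex_derive_continuous (V := R_NormedModule)).
    eexists; apply Hd. }
  destruct (Req_dec m a) as [-> | Hma].
  { assert (0 <= df a); [| lra].
    apply (is_derive_ge0_at_right_min f a _ (b - a)); auto; [lra |].
    intros; apply Hm; lra. }
  destruct (Req_dec m b) as [-> | Hmb].
  { assert (df b <= 0); [| lra].
    apply (is_derive_le0_at_left_min f b _ (b - a)); auto; [lra |].
    intros; apply Hm; lra. }
  exists m; split; [lra |].
  apply Rle_antisym.
  - apply (is_derive_le0_at_left_min f m _ (m - a)); auto; [lra |].
    intros; apply Hm; lra.
  - apply (is_derive_ge0_at_right_min f m _ (b - m)); auto; [lra |].
    intros; apply Hm; lra.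
Qed.

Lemma derive_neg_everywhere (f df : R -> R) :
  (forall x, is_derive f x (df x)) -> (forall x, df x <> 0) -> df 0 < 0 ->
  forall u, df u < 0.
Proof.
  intros Hd Hnz H0 u.
  destruct (Rlt_or_le (df u) 0) as [| Hu]; auto.
  assert (Hpos : 0 < df u) by (specialize (Hnz u); lra).
  destruct (Rtotal_order u 0) as [Hlt | [-> | Hgt]]; [| lra |].
  - destruct (derive_Darboux (fun x => - f x) (fun x => - df x) u 0)
      as [c [_ Hc]]; auto; try lra.
    + intros x; apply (is_derive_opp f), Hd.
    + exfalso; apply (Hnz c); lra.
  - destruct (derive_Darboux f df 0 u) as [c [_ Hc]]; auto.
    exfalso; apply (Hnz c); lra.
Qed.

Lemma theta_plus_bound a th :
  0 < a -> 0 < th -> th < theta_plus a -> th < PI / 4 ->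
  1 < 2 * a ^ 2 + cos (2 * th).
Proof.
  intros Ha H0 Hp H4.
  assert (0 < cos (2 * th)) by (apply cos_gt_0; lra).
  unfold theta_plus in Hp; destruct (Rlt_dec 1 a); [nra |].
  assert (Hb : -1 <= 1 - 2 * a ^ 2 <= 1) by nra.
  pose proof (acos_bound (1 - 2 * a ^ 2)).
  pose proof (cos_acos _ Hb).
  enough (cos (acos (1 - 2 * a ^ 2)) < cos (2 * th)) by lra.
  apply cos_decreasing_1; lra.
Qed.

Lemma Pp_one_pos a th :
  0 < a -> 0 < th -> th < theta_plus a -> th < PI / 4 -> 0 < Pp a th 1.
Proof.
  intros Ha H0 Hp H4.
  pose proof (theta_plus_bound a th Ha H0 Hp H4).
  assert (E : 4 * a ^ 2 * Pp a th 1 = (2 * a ^ 2 + cos (2 * th)) ^ 2 - 1).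
  { pose proof (sin2_cos2 (2 * th)); unfold Rsqr in *.
    unfold Pp, Cc; field_simplify; [nra | lra]. }
  nra.
Qed.

(* [P] is concave in [x ^ 2], so on [-1, 1] it dominates the chord between
   [P 0 = a ^ 2] and [P 1]. *)
Lemma Pp_pos a th x :
  0 < a -> 0 < th -> th < theta_plus a -> th < PI / 4 ->
  -1 <= x <= 1 -> 0 < Pp a th x.
Proof.
  intros Ha H0 Hp H4 Hx.
  pose proof (Pp_one_pos a th Ha H0 Hp H4) as H1; unfold Pp in *.
  assert (Ht : 0 <= x ^ 2 <= 1) by nra.
  assert (0 <= Cc a th ^ 2 * (x ^ 2 * (1 - x ^ 2))).
  { apply Rmult_le_pos; [apply pow2_ge_0 | nra]. }
  assert (0 < (1 - x ^ 2) * a ^ 2 + x ^ 2 * (a ^ 2 + cos (2 * th) * 1 ^ 2 - Cc a th ^ 2 * 1 ^ 4)).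
  { destruct (Rlt_or_le (x ^ 2) 1); [| nra].
    assert (0 < (1 - x ^ 2) * a ^ 2) by (apply Rmult_lt_0_compat; nra).
    assert (0 <= x ^ 2 * (a ^ 2 + cos (2 * th) * 1 ^ 2 - Cc a th ^ 2 * 1 ^ 4))
      by (apply Rmult_le_pos; lra).
    lra. }
  nra.
Qed.

Lemma filterlim_cos_at_right_0 : filterlim cos (at_right 0) (at_left 1).
Proof.
  intros P [d Hd].
  assert (Hnear : locally 0 (fun e => ball 1 d (cos e))).
  { rewrite <- cos_0; apply (continuous_cos 0), locally_ball. }
  assert (Hsmall : locally 0 (fun e => ball 0 (mkposreal _ PI_RGT_0) e)) by apply locally_ball.
  unfold filtermap, at_right, within.
  eapply filter_imp; [| exact (filter_and _ _ Hnear Hsmall)].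
  intros e [Hb He] Hpos; apply Hd; [exact Hb |].
  change (Rabs (e - 0) < PI) in He; rewrite Rminus_0_r in He; apply Rabs_def2 in He.
  rewrite <- cos_0; apply cos_decreasing_1; lra.
Qed.

Lemma filterlim_opp_cos_cos :
  filterlim (fun e => (- cos e, cos e)) (at_right 0)
    (filter_prod (at_right (-1)) (at_left 1)).
Proof.
  apply filterlim_pair; [| exact filterlim_cos_at_right_0].
  replace (-1) with (- 1) by ring.
  apply (filterlim_comp _ _ _ cos Ropp _ (at_left 1));
    [exact filterlim_cos_at_right_0 | apply filterlim_Ropp_left].
Qed.

Lemma at_right_0_below r : 0 < r -> at_right 0 (fun e => 0 < e < r).
Proof.
  intros Hr.
  assert (Hb : locally 0 (fun e => ball 0 (mkposreal _ Hr) e)) by apply locally_ball.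
  unfold at_right, within; eapply filter_imp; [| exact Hb]; intros e He Hpos.
  change (Rabs (e - 0) < r) in He; rewrite Rminus_0_r in He; apply Rabs_def2 in He.
  lra.
Qed.

Lemma filterlim_RInt_of_is_RInt_gen (f : R -> R) (Fa Fb : (R -> Prop) -> Prop)
  {FFa : Filter Fa} {FFb : Filter Fb} (l : R) :
  is_RInt_gen f Fa Fb l ->
  filterlim (fun ab => RInt f (fst ab) (snd ab)) (filter_prod Fa Fb) (locally l).
Proof.
  intros Hf P HP; unfold filtermap.
  eapply filter_imp; [| exact (Hf P HP)]; intros ab [y [Hy Py]].
  rewrite (is_RInt_unique (V := R_CompleteNormedModule) _ _ _ _ Hy); exact Py.
Qed.

Section Integrands.

Variables a th : R.
Hypothesis Ha : 0 < a.
Hypothesis HP : forall x, -1 <= x <= 1 -> 0 < Pp a th x.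

Definition speed (y : R) : R := sqrt (Pp a th (cos y)).

(* Along a solution [phi' = - speed phi], so [- dtime], [- dbeta], [- dG] are
   [du/dphi], [dbeta/dphi], [dG/dphi]. *)
Definition dtime (y : R) : R := / speed y.
Definition dbeta (y : R) : R := Cc a th * cos y ^ 2 / speed y.
Definition dG (y : R) : R :=
  (Cc a th ^ 2 * cos y ^ 2 - cos (2 * th)) / (a + speed y) / speed y.
Definition dL (y : R) : R := Cc a th * dbeta y + a * dG y.

Lemma Pp_cos_pos y : 0 < Pp a th (cos y).
Proof. apply HP, COS_bound. Qed.

Lemma speed_pos y : 0 < speed y.
Proof. apply sqrt_lt_R0, Pp_cos_pos. Qed.

Lemma ex_derive_speed y : ex_derive speed y.
Proof. pose proof (Pp_cos_pos y); unfold speed, Pp in *; auto_derive; lra. Qed.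

Lemma speed_add_PI y : speed (y + PI) = speed y.
Proof. unfold speed, Pp; rewrite neg_cos; do 3 f_equal; ring. Qed.

Local Ltac continuity_by_derive :=
  intros y; apply (ex_derive_continuous (V := R_NormedModule));
  pose proof (speed_pos y); pose proof (ex_derive_speed y);
  auto_derive; repeat split; auto; lra.

Lemma dtime_cont : forall y, continuous dtime y.
Proof. unfold dtime; continuity_by_derive. Qed.

Lemma dbeta_cont : forall y, continuous dbeta y.
Proof. unfold dbeta; continuity_by_derive. Qed.

Lemma dG_cont : forall y, continuous dG y.
Proof. unfold dG; continuity_by_derive. Qed.

Lemma dL_cont : forall y, continuous dL y.
Proof. unfold dL, dbeta, dG; continuity_by_derive. Qed.

Lemma dtime_add_PI y : dtime (y + PI) = dtime y.
Proof. unfold dtime; rewrite speed_add_PI; reflexivity. Qed.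

Lemma dbeta_add_PI y : dbeta (y + PI) = dbeta y.
Proof. unfold dbeta; rewrite speed_add_PI, neg_cos; f_equal; ring. Qed.

Lemma dG_add_PI y : dG (y + PI) = dG y.
Proof. unfold dG; rewrite speed_add_PI, neg_cos; do 3 f_equal; ring. Qed.

Lemma dL_add_PI y : dL (y + PI) = dL y.
Proof. unfold dL; rewrite dbeta_add_PI, dG_add_PI; reflexivity. Qed.

Lemma L_integrand_cont x : -1 < x < 1 -> continuous (L_integrand a th) x.
Proof.
  intros Hx; apply (ex_derive_continuous (V := R_NormedModule)).
  pose proof (HP x ltac:(lra)) as Hp.
  assert (0 < (1 - x ^ 2) * Pp a th x) by (apply Rmult_lt_0_compat; nra).
  unfold L_integrand; unfold Pp in *; auto_derive.
  repeat split; try lra.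
  apply Rmult_integral_contrapositive_currified; apply Rgt_not_eq.
  - apply sqrt_lt_R0; lra.
  - apply Rplus_lt_le_0_compat; [lra | apply sqrt_pos].
Qed.

Lemma L_integrand_cos y : 0 < y < PI -> sin y * L_integrand a th (cos y) = dL y.
Proof.
  intros Hy.
  pose proof (sin_gt_0 y (proj1 Hy) (proj2 Hy)).
  pose proof (speed_pos y).
  assert (Hsin : sqrt (1 - cos y ^ 2) = sin y).
  { rewrite <- (sqrt_pow2 (sin y)) by lra; f_equal.
    pose proof (sin2_cos2 y); unfold Rsqr in *; nra. }
  unfold L_integrand, dL, dbeta, dG; fold (speed y).
  rewrite sqrt_mult, Hsin by (pose proof (COS_bound y); nra || apply Rlt_le, Pp_cos_pos).
  fold (speed y); field; lra.
Qed.

Lemma RInt_dL_cos e : 0 < e < PI / 2 ->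
  RInt dL e (PI - e) = RInt (L_integrand a th) (- cos e) (cos e).
Proof.
  intros He; pose proof PI_RGT_0.
  assert (Hce : 0 < cos e < 1) by (split; [apply cos_gt_0 | apply cos_interior]; lra).
  assert (HexL : ex_RInt (L_integrand a th) (cos e) (- cos e)).
  { apply (ex_RInt_continuous (V := R_CompleteNormedModule)); intros x Hx.
    rewrite Rmin_right, Rmax_left in Hx by lra.
    apply L_integrand_cont; lra. }
  rewrite <- (opp_RInt_swap (V := R_CompleteNormedModule) (L_integrand a th)) by exact HexL.
  rewrite <- (RInt_opp (V := R_CompleteNormedModule) (L_integrand a th)) by exact HexL.
  rewrite <- Rtrigo_facts.cos_pi_minus.
  rewrite <- (RInt_comp (V := R_CompleteNormedModule) _ cos (fun y => - sin y)).
  - apply RInt_ext; intros x Hx.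
    rewrite Rmin_left, Rmax_right in Hx by lra.
    rewrite <- L_integrand_cos by lra.
    change (sin x * L_integrand a th (cos x)
            = - sin x * - L_integrand a th (cos x) :> R).
    ring.
  - intros x Hx; rewrite Rmin_left, Rmax_right in Hx by lra.
    apply (continuous_opp (L_integrand a th)), L_integrand_cont, cos_interior; lra.
  - intros x _; split.
    + auto_derive; auto; ring.
    + apply (ex_derive_continuous (V := R_NormedModule)); auto_derive; auto.
Qed.

Lemma primitive_dL_PI : L_is_zero a th -> primitive dL PI = 0.
Proof.
  intros HL; pose proof PI2_1.
  assert (Hsmall := at_right_0_below (PI / 2) ltac:(lra)).
  assert (Hto0 : filterlim (fun e => RInt dL e (PI - e)) (at_right 0) (locally 0)).
  { apply (filterlim_ext_loc (fun e => RInt (L_integrand a th) (- cos e) (cos e))).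
    - eapply filter_imp; [| exact Hsmall]; intros e He; symmetry; apply RInt_dL_cos, He.
    - apply (filterlim_comp _ _ _ _ (fun ab => RInt (L_integrand a th) (fst ab) (snd ab))
               _ _ _ filterlim_opp_cos_cos).
      exact (filterlim_RInt_of_is_RInt_gen _ _ _ _ HL). }
  assert (Hcont : filterlim (fun e => primitive dL (PI - e) - primitive dL e)
                    (at_right 0) (locally (primitive dL PI))).
  { replace (primitive dL PI) with (primitive dL (PI - 0) - primitive dL 0)
      by (rewrite Rminus_0_r, primitive_0; ring).
    apply (filterlim_filter_le_1 _ (filter_le_within (fun e => 0 < e))).
    apply (ex_derive_continuous (V := R_NormedModule)
             (fun e => primitive dL (PI - e) - primitive dL e) 0).
    apply (ex_derive_minus (fun e => primitive dL (PI - e)) (primitive dL)).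
    - eexists; apply (is_derive_comp (primitive dL) (fun e => PI - e));
        [apply is_derive_primitive, dL_cont | auto_derive; auto].
    - eexists; apply is_derive_primitive, dL_cont. }
  apply (filterlim_locally_unique _ _ _ Hcont).
  apply (filterlim_ext (fun e => RInt dL e (PI - e))); [| exact Hto0].
  intros e; unfold primitive.
  rewrite <- (RInt_Chasles (V := R_CompleteNormedModule) dL 0 e (PI - e))
    by apply ex_RInt_everywhere, dL_cont.
  symmetry; apply Rplus_minus_l.
Qed.

Lemma primitive_dbeta_dG_2PI : L_is_zero a th ->
  Cc a th * primitive dbeta (2 * PI) + a * primitive dG (2 * PI) = 0.
Proof.
  intros HL.
  rewrite <- (primitive_lin dbeta dG) by (apply dbeta_cont || apply dG_cont).
  fold (primitive dL (2 * PI)).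
  replace (2 * PI) with (PI + PI) by ring.
  rewrite (primitive_shift dL dL_cont PI dL_add_PI), primitive_dL_PI by exact HL.
  ring.
Qed.

Definition period : R := primitive dtime (2 * PI).

Lemma period_pos : 0 < period.
Proof.
  unfold period; rewrite <- (primitive_0 dtime).
  apply primitive_lt; [apply dtime_cont | | pose proof PI_RGT_0; lra].
  intros; apply Rinv_0_lt_compat, speed_pos.
Qed.

Section Solution.

Variable phi : R -> R.
Hypothesis phi_ex : forall u, ex_derive phi u.
Hypothesis phi_sq : forall u, Derive phi u ^ 2 = Pp a th (cos (phi u)).
Hypothesis phi_0 : phi 0 = 0.
Hypothesis phi_d0 : Derive phi 0 <= 0.

Lemma Derive_phi u : Derive phi u = - speed (phi u).
Proof.
  assert (Hnz : forall u, Derive phi u <> 0).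
  { intros x Hx; pose proof (Pp_cos_pos (phi x)); rewrite <- phi_sq, Hx in *; lra. }
  assert (Hneg : Derive phi u < 0).
  { apply (derive_neg_everywhere phi); auto.
    - intros; apply Derive_correct, phi_ex.
    - specialize (Hnz 0); lra. }
  unfold speed; rewrite <- phi_sq.
  replace (Derive phi u ^ 2) with ((- Derive phi u) ^ 2) by ring.
  rewrite sqrt_pow2; lra.
Qed.

Lemma primitive_along_phi (w B : R -> R) :
  (forall y, continuous w y) ->
  (forall u, is_derive B u (w (phi u) * speed (phi u))) ->
  forall u, B u = B 0 - primitive w (phi u).
Proof.
  intros Hw HB u.
  enough (- B u = - B 0 + primitive w (phi u) - primitive w (phi 0))
    by (rewrite phi_0, primitive_0 in *; lra).
  apply (primitive_comp w Hw phi (fun u => - speed (phi u)) (fun u => - B u)); intros x.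
  - rewrite <- Derive_phi; apply Derive_correct, phi_ex.
  - replace (w (phi x) * - speed (phi x)) with (- (w (phi x) * speed (phi x))) by ring.
    apply (is_derive_opp B), HB.
Qed.

Lemma phi_add_period u : phi (u + period) = phi u - 2 * PI.
Proof.
  assert (Htime : forall u, u = - primitive dtime (phi u)).
  { intros x.
    enough (x = 0 - primitive dtime (phi x)) by lra.
    apply (primitive_along_phi dtime (fun u => u) dtime_cont).
    intros; unfold dtime; rewrite Rinv_l by apply Rgt_not_eq, speed_pos.
    apply (is_derive_id (K := R_AbsRing)). }
  apply (primitive_inj dtime dtime_cont).
  - intros; apply Rinv_0_lt_compat, speed_pos.
  - rewrite (primitive_sub_twice_period dtime dtime_cont PI dtime_add_PI).
    pose proof (Htime (u + period)); pose proof (Htime u).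
    change (primitive dtime (2 * PI)) with period; lra.
Qed.

Lemma add_period_along_phi (w B : R -> R) :
  (forall y, continuous w y) -> (forall y, w (y + PI) = w y) ->
  (forall u, is_derive B u (w (phi u) * speed (phi u))) ->
  forall u, B (u + period) = B u + primitive w (2 * PI).
Proof.
  intros Hw Hper HB u.
  pose proof (primitive_along_phi w B Hw HB u).
  pose proof (primitive_along_phi w B Hw HB (u + period)) as E.
  rewrite phi_add_period, (primitive_sub_twice_period w Hw PI Hper) in E; lra.
Qed.

Lemma Gprime_add_period u : Gprime a th phi (u + period) = Gprime a th phi u.
Proof.
  unfold Gprime; rewrite !Derive_phi, phi_add_period.
  unfold speed; rewrite cos_sub_2PI; reflexivity.
Qed.

Lemma beta_add_period (beta : R -> R) :
  (forall u, is_derive beta u (Cc a th * cos (phi u) ^ 2)) ->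
  forall u, beta (u + period) = beta u + primitive dbeta (2 * PI).
Proof.
  intros Hbeta; apply (add_period_along_phi dbeta beta dbeta_cont dbeta_add_PI).
  intros u; pose proof (speed_pos (phi u)); unfold dbeta.
  replace (Cc a th * cos (phi u) ^ 2 / speed (phi u) * speed (phi u))
    with (Cc a th * cos (phi u) ^ 2) by (field; lra).
  apply Hbeta.
Qed.

Lemma G_add_period (G : R -> R) :
  (forall u, is_derive G u (Gprime a th phi u)) ->
  forall u, G (u + period) = G u + primitive dG (2 * PI).
Proof.
  intros HG; apply (add_period_along_phi dG G dG_cont dG_add_PI).
  intros u; pose proof (speed_pos (phi u)); unfold dG.
  replace (_ * speed (phi u)) with (Gprime a th phi u); [apply HG |].
  unfold Gprime; rewrite Derive_phi; field; lra.
Qed.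

End Solution.

End Integrands.

Lemma Xmap_translate a th (phi beta G : R -> R) T K M u v :
  a <> 0 -> Cc a th * K + a * M = 0 ->
  phi (u + T) = phi u - 2 * PI ->
  Gprime a th phi (u + T) = Gprime a th phi u ->
  beta (u + T) = beta u + K -> G (u + T) = G u + M ->
  Xmap a th phi beta G (u + T) (v + - K / a) = Xmap a th phi beta G u v.
Proof.
  intros Ha HKM Hphi HGp Hbeta HG.
  unfold Xmap; rewrite Hphi, cos_sub_2PI, sin_sub_2PI, HGp, Hbeta, HG.
  replace (a * (v + - K / a) + (beta u + K)) with (a * v + beta u) by (field; auto).
  replace (Cc a th * (v + - K / a) - (G u + M)) with (Cc a th * v - G u)
    by (apply (Rmult_eq_reg_l a); [field_simplify; auto; lra | auto]).
  reflexivity.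
Qed.

Theorem proposition5p2 :
  forall (a th : R) (phi beta G : R -> R),
    0 < a ->
    (* theta = tilde theta_alpha *)
    0 < th -> th < theta_plus a -> th < PI / 4 ->
    L_is_zero a th ->
    (forall u, ex_derive phi u) ->
    (forall u, (Derive phi u) ^ 2 = Pp a th (cos (phi u))) ->
    phi 0 = 0 -> Derive phi 0 <= 0 ->
    (forall u, is_derive beta u (Cc a th * cos (phi u) ^ 2)) ->
    beta 0 = 0 ->
    (forall u, is_derive G u (Gprime a th phi u)) ->
    G 0 = 0 ->
    exists Zu Zv : R, (Zu, Zv) <> (0, 0) /\
      forall u v, Xmap a th phi beta G (u + Zu) (v + Zv) = Xmap a th phi beta G u v.
Proof.
  intros a th phi beta G Ha H0 Hp H4 HL Hex Hsq Hphi0 Hd0 Hbeta _ HG _.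
  assert (HP : forall x, -1 <= x <= 1 -> 0 < Pp a th x)
    by (intros; apply Pp_pos; auto).
  exists (period a th), (- primitive (dbeta a th) (2 * PI) / a); split.
  - pose proof (period_pos a th HP).
    intros E; injection E; lra.
  - intros u v.
    apply (Xmap_translate _ _ _ _ _ _ _ (primitive (dG a th) (2 * PI))).
    + lra.
    + apply primitive_dbeta_dG_2PI; auto.
    + eapply phi_add_period; eauto.
    + eapply Gprime_add_period; eauto.
    + eapply beta_add_period; eauto.
    + eapply G_add_period; eauto.
Qed.
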